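(* Let $\{\widehat{\mathcal G}_N\}_N$ be a family of directed acyclic graphs on node sets $\{1,\dots,N\}$ with bounded diameter, in which the reference node $N$ is a common ancestor of all nodes, and let $\mathbf H,\mathbf M$ be the associated matrices defined in the context. Then the condition $$\limsup_{N\to\infty}\ \sup_{\mathbf A:\|\mathbf A\|_\infty\le1}\ \|\mathbf M^{-1}(\mathbf H\odot\mathbf A)\mathbf 1\|_\infty<\infty$$ is satisfied if one of the following three conditions is met: (i) all paths from any node to the reference node have bounded length; (ii) $\sup_i\rho_i^-<\infty$; (iii) a fraction bounded away from $0$ of the in-neighbors of any node is $(\tau,h)$-proximal to the reference node, for some $\tau>0$ and $h<\infty$.
   Context: For a directed graph on $\{1,\dots,N\}$, $\mathcal N_i^-$ denotes the set of in-neighbors of node $i$ and $\rho_i^-=|\mathcal N_i^-|$. In this directed setting the least-squares quality estimates are defined by $\widehat q_N=0$ and $\widehat q_i=\sum_{j\in\mathcal N_i^-}\frac{\widehat q_j+\widehat d_{i,j}}{\rho_i^-}$ for $i<N$; correspondingly $[\mathbf H]_{i,j}=1/\rho_i^-$ if $i<N$ and $j\in\mathcal N_i^-$, and $[\mathbf H]_{i,j}=0$ otherwise, and $\mathbf M=\mathbf I-\mathbf H$, so that $\widehat{\mathbf q}=\mathbf M^{-1}(\mathbf H\odot\widehat{\mathbf D})\mathbf 1$. Here $\odot$ is the Hadamard product, $\mathbf 1$ the all-ones vector, $\mathbf A=\{a_{i,j}\}$ ranges over real $N\times N$ matrices with $\|\mathbf A\|_\infty=\sup_{i,j}|a_{i,j}|$,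 and $\|\cdot\|_\infty$ of a vector is its maximum absolute entry. The random walk on such a graph starting at node $i$ moves from the current node $u$ to a uniformly random node of $\mathcal N_u^-$ and stops upon hitting node $N$. Definition: given a family of graphs $\{\mathcal G_N\}_N$, a node $i$ is proximal to the reference node $N$ with parameters $(\tau,h)$ if the random walk starting from $i$ reaches $N$ within $h$ hops with a probability that is asymptotically (in $N$) bounded below by $\tau$. *)

From HB Require Import structures.
From mathcomp Require Import all_boot all_order all_algebra.
From mathcomp Require Import reals.
Set Implicit Arguments. Unset Strict Implicit. Unset Printing Implicit Defensive.
Import Order.TTheory GRing.Theory Num.Theory.
Local Open Scope ring_scope.

(* A family of directed graphs: for every n, a graph on 'I_n.+1, i.e. on
   N = n+1 nodes; node k of the paper (1 <= k <= N) is the ordinal k-1, and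
   the reference node N is ord_max.  [G n u v] means there is an edge u -> v,
   so u is an in-neighbor of v. *)
Definition graph_family := forall n : nat, rel 'I_n.+1.

Definition in_nbrs n (E : rel 'I_n.+1) (i : 'I_n.+1) : {set 'I_n.+1} :=
  [set j | E j i].
Definition indeg n (E : rel 'I_n.+1) (i : 'I_n.+1) : nat := #|in_nbrs E i|.

Definition Hmx (R : realType) n (E : rel 'I_n.+1) : 'M[R]_n.+1 :=
  \matrix_(i, j) (if (i != ord_max) && E j i then (indeg E i)%:R^-1 else 0).

Definition Mmx (R : realType) n (E : rel 'I_n.+1) : 'M[R]_n.+1 :=
  1%:M - Hmx R E.

Definition hadamard (R : realType) n (A B : 'M[R]_n.+1) : 'M[R]_n.+1 :=
  \matrix_(i, j) (A i j * B i j).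

Definition qvec (R : realType) n (E : rel 'I_n.+1) (A : 'M[R]_n.+1)
  : 'cV[R]_n.+1 :=
  invmx (Mmx R E) *m (hadamard (Hmx R E) A *m const_mx 1).

(* Probability that the random walk started at i (moving to a uniformly random
   in-neighbour, stopped at the reference node) hits the reference node within
   h hops. *)
Fixpoint hit_prob (R : realType) n (E : rel 'I_n.+1) (h : nat) (i : 'I_n.+1)
  : R :=
  if i == ord_max then 1 else
  match h with
  | 0 => 0
  | h'.+1 => (\sum_(j in in_nbrs E i) hit_prob R E h' j) / (indeg E i)%:R
  end.

Definition acyclic_graph n (E : rel 'I_n.+1) : Prop :=
  forall u v : 'I_n.+1, E u v -> ~~ connect E v u.

Definition ref_ancestor n (E : rel 'I_n.+1) : Prop :=
  forall i : 'I_n.+1, connect E ord_max i.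

Definition bounded_diameter (G : graph_family) : Prop :=
  exists D : nat, forall n (u v : 'I_n.+1), connect (G n) u v ->
    exists p : seq 'I_n.+1, [/\ path (G n) u p, last u p = v & size p <= D]%N.

Definition cond_i (G : graph_family) : Prop :=
  exists L : nat, forall n (i : 'I_n.+1) (p : seq 'I_n.+1),
    path (fun u v => G n v u) i p -> last i p = ord_max -> (size p <= L)%N.

Definition cond_ii (G : graph_family) : Prop :=
  exists K : nat, forall n (i : 'I_n.+1), (indeg (G n) i <= K)%N.

Definition cond_iii (R : realType) (G : graph_family) : Prop :=
  exists (c tau : R) (h N0 : nat), 0 < c /\ 0 < tau /\
    forall n, (N0 <= n)%N -> forall i : 'I_n.+1, i != ord_max ->
      c * (indeg (G n) i)%:R <=
        #|[set j in in_nbrs (G n) i | tau <= hit_prob R (G n) h j]|%:R.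

(* If M x = b then x = H x + b, where H averages over in-neighbours and
   vanishes on the row of the reference node N.  Unrolling this identity h
   times gives
     |x_i| <= h max|b| + (1 - p_h(i)) max|x|,
   with p_h(i) the probability that the walk from i hits N within h hops.
   Hence if p_m >= delta > 0 at every node, then max|x| <= m max|b| / delta:
   for b = 0 this shows that M is invertible, and for b = (H o A) 1, whose
   entries are at most 1, it bounds the estimates uniformly.  Each of
   (i)-(iii) provides such m and delta: (i) delta = 1; (ii) following a path
   of length at most the diameter D from N to i, delta = K^-D when all
   in-degrees are at most K; (iii) delta = min(c tau, 1) after h + 1 hops. *)

From HB Require Import structures.
From mathcomp Require Import all_boot all_order all_algebra.
From mathcomp Require Import reals.
From mathcomp Require Import ring lra.
Import Order.TTheory GRing.Theory Num.Theory.
Set Implicit Arguments. Unset Strict Implicit. Unset Printing Implicit Defensive.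
Local Open Scope ring_scope.

Lemma avg_affine (F : numFieldType) (I : finType) (S : {set I}) (a d : F)
    (f : I -> F) : (0 < #|S|)%N ->
  (\sum_(j in S) (a + d * (1 - f j))) / #|S|%:R =
    a + d * (1 - (\sum_(j in S) f j) / #|S|%:R).
Proof.
move=> S_gt0; rewrite big_split /= -mulr_sumr big_split /= sumrN !sumr_const.
by rewrite -mulr_natr; field; rewrite pnatr_eq0 -lt0n.
Qed.

Lemma unitmx_of_ker (F : fieldType) k (A : 'M[F]_k) :
  (forall x : 'cV[F]_k, A *m x = 0 -> x = 0) -> A \in unitmx.
Proof.
move=> A_inj; rewrite unitmxE unitfE -det_tr; apply/negP => /det0P[v v_neq0 vA].
have : A *m v^T = 0 by rewrite -[A]trmxK -trmx_mul vA trmx0.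
by move/A_inj/(congr1 trmx); rewrite trmxK trmx0 => v0; rewrite v0 eqxx in v_neq0.
Qed.

Section OneGraph.
Variables (R : realType) (n : nat) (E : rel 'I_n.+1).

Lemma hit_prob_ref h : hit_prob R E h ord_max = 1.
Proof. by case: h => [|h] /=; rewrite eqxx. Qed.

Lemma hit_prob_ge0 h i : 0 <= hit_prob R E h i.
Proof.
by elim: h i => [|h IH] i /=; case: ifP => // _; rewrite divr_ge0 ?sumr_ge0.
Qed.

Hypothesis E_ref : ref_ancestor E.

Lemma ref_reachable_rev i :
  exists2 p, path (fun u v => E v u) i p & last i p = ord_max.
Proof.
have /connectP[p p_path ->] : connect [rel u v | E v u] i ord_max.
  by rewrite connect_rev; exact: E_ref.
by exists p.
Qed.

Lemma indeg_gt0 i : i != ord_max -> (0 < indeg E i)%N.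
Proof.
have [[|j p] /= p_path p_last] := ref_reachable_rev i.
  by rewrite p_last eqxx.
by move=> _; apply/card_gt0P; exists j; rewrite inE; case/andP: p_path.
Qed.

Lemma mulmx_Hmx (x : 'cV[R]_n.+1) i :
  (Hmx R E *m x) i 0 = if i == ord_max then 0 else
    (\sum_(j in in_nbrs E i) x j 0) / (indeg E i)%:R.
Proof.
rewrite mxE; case: ifP => i_ref.
  by apply: big1 => j _; rewrite mxE i_ref mul0r.
rewrite mulr_suml [RHS]big_mkcond; apply: eq_bigr => j _.
by rewrite mxE i_ref inE /=; case: (E j i); rewrite ?mul0r // mulrC.
Qed.

Lemma Hmx_ge0 i j : 0 <= Hmx R E i j.
Proof. by rewrite mxE; case: ifP; rewrite ?invr_ge0 ?ler0n. Qed.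

Lemma sum_Hmx_row_le1 i : \sum_j Hmx R E i j <= 1.
Proof.
have [->|i_ref] := eqVneq i ord_max.
  by rewrite big1 ?ler01 // => j _; rewrite mxE eqxx.
rewrite (eq_bigr (fun j => if j \in in_nbrs E i then (indeg E i)%:R^-1 else 0)).
  rewrite -big_mkcond sumr_const -/(indeg E i) -[_^-1 *+ _]mulr_natr.
  by rewrite mulVf // pnatr_eq0 -lt0n indeg_gt0.
by move=> j _; rewrite mxE i_ref inE.
Qed.

Lemma norm_hadamard_Hmx_le1 (A : 'M[R]_n.+1) :
  (forall i j, `|A i j| <= 1) ->
  forall i, `|(hadamard (Hmx R E) A *m (const_mx 1 : 'cV[R]_n.+1)) i 0| <= 1.
Proof.
move=> A_le1 i; rewrite mxE.
apply: le_trans (ler_norm_sum _ _ _) (le_trans _ (sum_Hmx_row_le1 i)).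
apply: ler_sum => j _; rewrite [hadamard _ _ _ _]mxE [const_mx _ _ _]mxE mulr1.
by rewrite normrM ger0_norm ?Hmx_ge0 // ler_piMr ?Hmx_ge0.
Qed.

Lemma hadamard_Hmx_ref (A : 'M[R]_n.+1) :
  (hadamard (Hmx R E) A *m (const_mx 1 : 'cV[R]_n.+1)) ord_max 0 = 0.
Proof. by rewrite mxE big1 // => j _; rewrite !mxE eqxx !mul0r. Qed.

Lemma norm_le_hit_prob (x b : 'cV[R]_n.+1) (beta X : R) :
  Mmx R E *m x = b -> (forall j, `|b j 0| <= beta) -> b ord_max 0 = 0 ->
  (forall j, `|x j 0| <= X) ->
  forall h i, `|x i 0| <= h%:R * beta + X * (1 - hit_prob R E h i).
Proof.
move=> Mx_b b_le b_ref x_le.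
have beta_ge0 : 0 <= beta by apply: le_trans (b_le ord_max).
have X_ge0 : 0 <= X by apply: le_trans (x_le ord_max).
have x_eq i : x i 0 = (Hmx R E *m x) i 0 + b i 0.
  by rewrite -Mx_b /Mmx mulmxBl mul1mx !mxE subrKC.
have x_ref : x ord_max 0 = 0 by rewrite x_eq mulmx_Hmx eqxx b_ref addr0.
elim=> [|h IH] i; have [->|i_ref] := eqVneq i ord_max.
- by rewrite x_ref normr0 hit_prob_ref subrr mulr0 addr0 mul0r.
- by rewrite /= (negbTE i_ref) mul0r add0r subr0 mulr1.
- by rewrite x_ref hit_prob_ref subrr mulr0 addr0 normr0 mulr_ge0.
have avg_le :
    `|(Hmx R E *m x) i 0| <= h%:R * beta + X * (1 - hit_prob R E h.+1 i).
  rewrite mulmx_Hmx /= (negbTE i_ref) /indeg -avg_affine ?indeg_gt0 //.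
  rewrite normrM normfV (ger0_norm (ler0n _ _)) ler_wpM2r ?invr_ge0 ?ler0n //.
  exact: le_trans (ler_norm_sum _ _ _) (ler_sum _ (fun j _ => IH j)).
rewrite x_eq -natr1 mulrDl mul1r addrAC.
exact: le_trans (ler_normD _ _) (lerD avg_le (b_le i)).
Qed.

Lemma norm_le_of_hit_prob_ge (x b : 'cV[R]_n.+1) (beta delta : R) m :
  0 < delta -> (forall i, delta <= hit_prob R E m i) ->
  Mmx R E *m x = b -> (forall j, `|b j 0| <= beta) -> b ord_max 0 = 0 ->
  forall i, `|x i 0| <= m%:R * beta / delta.
Proof.
move=> delta_gt0 hit_ge Mx_b b_le b_ref.
set X := \big[Num.max/0]_j `|x j 0|.
have x_le j : `|x j 0| <= X := le_bigmax _ _ j.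
have [i0 _ X_eq] : {i0 | i0 \in xpredT & X = `|x i0 0|}.
  exact: eq_bigmax ord_max xpredT (fun j => `|x j 0|) isT
    (fun j _ => normr_ge0 (x j 0)).
have := norm_le_hit_prob Mx_b b_le b_ref x_le m i0; rewrite -X_eq => X_le.
have X_ge0 : 0 <= X by rewrite X_eq.
have X_hit : X * (1 - hit_prob R E m i0) <= X * (1 - delta).
  by rewrite ler_wpM2l // lerB.
move=> i; apply: le_trans (x_le i) _.
rewrite ler_pdivlMr //; nra.
Qed.

Lemma Mmx_unitmx m (delta : R) :
  0 < delta -> (forall i, delta <= hit_prob R E m i) -> Mmx R E \in unitmx.
Proof.
move=> delta_gt0 hit_ge; apply: unitmx_of_ker => x Mx0; apply/matrixP => i j.
have zero_le0 k : `|(0 : 'cV[R]_n.+1) k 0| <= 0 by rewrite mxE normr0.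
have := norm_le_of_hit_prob_ge delta_gt0 hit_ge Mx0 zero_le0 (mxE _ _ _ _) i.
by rewrite mulr0 mul0r normr_le0 [j]ord1 mxE => /eqP.
Qed.

Lemma norm_qvec_le m (delta : R) :
  0 < delta -> (forall i, delta <= hit_prob R E m i) ->
  forall A : 'M[R]_n.+1, (forall i j, `|A i j| <= 1) ->
  forall i, `|qvec E A i 0| <= m%:R / delta.
Proof.
move=> delta_gt0 hit_ge A A_le1 i; rewrite -[m%:R]mulr1.
have Mq : Mmx R E *m qvec E A = hadamard (Hmx R E) A *m const_mx 1.
  by rewrite /qvec mulKVmx // (Mmx_unitmx delta_gt0 hit_ge).
exact: norm_le_of_hit_prob_ge delta_gt0 hit_ge Mq (norm_hadamard_Hmx_le1 A_le1)
  (hadamard_Hmx_ref A) i.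
Qed.

Lemma hit_prob_short_paths k i :
  (forall p, path (fun u v => E v u) i p -> last i p = ord_max ->
     (size p <= k)%N) ->
  hit_prob R E k i = 1.
Proof.
elim: k i => [|k IH] i short /=; case: ifP => // /negbT i_ref.
  have [[|j p] p_path p_last] := ref_reachable_rev i.
    by rewrite -p_last eqxx in i_ref.
  by have := short _ p_path p_last.
rewrite (eq_bigr (fun _ => 1)) => [|j]; last first.
  rewrite inE => Eji; apply: IH => p p_path p_last.
  by have := short (j :: p); rewrite /= Eji p_path ltnS; exact.
rewrite sumr_const -/(indeg E i) -[_ *+ _]mulr_natr mul1r.
by rewrite mulfV // pnatr_eq0 -lt0n indeg_gt0.
Qed.

Lemma hit_prob_ge_path K p m : (0 < K)%N -> (forall j, indeg E j <= K)%N ->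
  path E ord_max p -> (size p <= m)%N ->
  K%:R^-1 ^+ m <= hit_prob R E m (last ord_max p).
Proof.
move=> K_gt0 indeg_le.
have K_inv_ge0 : 0 <= K%:R^-1 :> R by rewrite invr_ge0 ler0n.
have K_inv_le1 : K%:R^-1 <= 1 :> R by rewrite invf_le1 ?ltr0n // ler1n.
elim/last_ind: p m => [|p j IH] m /=; first by rewrite hit_prob_ref exprn_ile1.
rewrite rcons_path last_rcons size_rcons => /andP[p_path Eij].
case: m => // m size_le.
have [->|j_ref] := eqVneq j ord_max; first by rewrite hit_prob_ref exprn_ile1.
set i := last ord_max p in Eij IH *.
have indeg_gt0_j : (0 < indeg E j)%N := indeg_gt0 j_ref.
rewrite /= (negbTE j_ref) exprSr.
apply: le_trans (_ : hit_prob R E m i / (indeg E j)%:R <= _).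
  apply: ler_pM; rewrite ?exprn_ge0 ?IH //.
  by rewrite lef_pV2 ?posrE ?ltr0n // ler_nat.
rewrite ler_wpM2r ?invr_ge0 ?ler0n // (bigD1 i) ?inE //= lerDl.
by rewrite sumr_ge0 // => k _; exact: hit_prob_ge0.
Qed.

Lemma hit_prob_ge_proximal (c tau : R) h : 0 < tau ->
  (forall i, i != ord_max -> c * (indeg E i)%:R <=
     #|[set j in in_nbrs E i | tau <= hit_prob R E h j]|%:R) ->
  forall i, Num.min (c * tau) 1 <= hit_prob R E h.+1 i.
Proof.
move=> tau_gt0 frac_le i; have [->|i_ref] := eqVneq i ord_max.
  by rewrite hit_prob_ref ge_min lexx orbT.
set S := [set j in in_nbrs E i | tau <= hit_prob R E h j].
rewrite /= (negbTE i_ref) ge_min; apply/orP; left.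
rewrite ler_pdivlMr ?ltr0n ?indeg_gt0 //.
have S_sub : S \subset in_nbrs E i by apply/subsetP => j; rewrite inE => /andP[].
rewrite (big_setID S) (setIidPr S_sub) /=.
apply: le_trans (_ : \sum_(j in S) hit_prob R E h j <= _); last first.
  by rewrite lerDl sumr_ge0 // => j _; exact: hit_prob_ge0.
apply: le_trans (_ : \sum_(j in S) tau <= _); last first.
  by apply: ler_sum => j; rewrite inE => /andP[].
rewrite sumr_const -[tau *+ _]mulr_natr mulrAC mulrC.
by rewrite ler_wpM2l ?(ltW tau_gt0) ?frac_le.
Qed.

End OneGraph.

Definition hits_ref_uniformly (R : realType) (G : graph_family) : Prop :=
  exists (m : nat) (delta : R) (N0 : nat), 0 < delta /\
    forall n, (N0 <= n)%N -> forall i, delta <= hit_prob R (G n) m i.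

Lemma cond_i_hits_ref (R : realType) (G : graph_family) :
  (forall n, ref_ancestor (G n)) -> cond_i G -> hits_ref_uniformly R G.
Proof.
move=> G_ref [L short]; exists L, 1, 0%N; split=> [|n _ i]; first exact: ltr01.
by rewrite hit_prob_short_paths // => p; exact: short.
Qed.

Lemma cond_ii_hits_ref (R : realType) (G : graph_family) :
  (forall n, ref_ancestor (G n)) -> bounded_diameter G -> cond_ii G ->
  hits_ref_uniformly R G.
Proof.
move=> G_ref [D diam] [K indeg_le]; exists D, (K.+1%:R^-1 ^+ D), 0%N.
split=> [|n _ i]; first by rewrite exprn_gt0 // invr_gt0 ltr0Sn.
have [p [p_path <- p_size]] := diam n ord_max i (G_ref n i).
exact: (hit_prob_ge_path R (G_ref n) (ltn0Sn K)
  (fun j => leqW (indeg_le n j)) p_path p_size).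
Qed.

Lemma cond_iii_hits_ref (R : realType) (G : graph_family) :
  (forall n, ref_ancestor (G n)) -> cond_iii R G -> hits_ref_uniformly R G.
Proof.
move=> G_ref [c [tau [h [N0 [c_gt0 [tau_gt0 frac_le]]]]]].
exists h.+1, (Num.min (c * tau) 1), N0.
split=> [|n N0_le]; first by rewrite lt_min ltr01 mulr_gt0.
exact: (hit_prob_ge_proximal (G_ref n) tau_gt0 (frac_le n N0_le)).
Qed.

Theorem proposition3 (R : realType) (G : graph_family) :
  (forall n, acyclic_graph (G n)) ->
  (forall n, ref_ancestor (G n)) ->
  bounded_diameter G ->
  cond_i G \/ cond_ii G \/ cond_iii R G ->
  exists (C : R) (N0 : nat), forall n, (N0 <= n)%N ->
    forall A : 'M[R]_n.+1, (forall i j, `|A i j| <= 1) ->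
      forall i, `|qvec (G n) A i 0| <= C.
Proof.
move=> _ G_ref diam conds.
have [m [delta [N0 [delta_gt0 hit_ge]]]] : hits_ref_uniformly R G.
  case: conds => [|[]]; [exact: cond_i_hits_ref | exact: cond_ii_hits_ref |
    exact: cond_iii_hits_ref].
exists (m%:R / delta), N0 => n N0_le A A_le1.
exact: (norm_qvec_le (G_ref n) delta_gt0 (hit_ge n N0_le) A_le1).
Qed.
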